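(* Let $(R,\mathfrak m,k)$ be a commutative noetherian local ring and $I$ an ideal with $\nu(I)=2$ and $\operatorname{grade}_R(I)=0$. Let $f_1,f_2$ be a minimal generating set of $I$, $S=R/I$, $E$ the Koszul complex on $f_1,f_2$ with $E_1$ having basis $v_1,v_2$, $\partial(v_i)=f_i$. Then the following are equivalent: (1) $I$ is a q.c.i. ideal; (2) $\mathrm H_1(E)\cong S^2$, $(0:_RI)=\Delta R$ and $(0:_R\Delta)=I$, where $\Delta=a_{11}a_{22}-a_{12}a_{21}$ for cycles $z_j=a_{1j}v_1+a_{2j}v_2$ ($j=1,2$, $a_{ij}\in R$) whose homology classes minimally generate $\mathrm H_1(E)$; (3) there exist elements $a,b,c,d\in\mathfrak m$ such that the sequence $$R^4\xrightarrow{d_3}R^3\xrightarrow{d_2}R^2\xrightarrow{d_1}R\xrightarrow{d_0}R\xrightarrow{d_1^{\mathrm T}}R^2$$ is exact, where $d_0$ is multiplication by $ad-bc$, $d_1=\begin{bmatrix} f_1& f_2\end{bmatrix}$, $$d_2=\begin{bmatrix}-f_2&a&b\\ f_1&c&d\end{bmatrix},\qquad d_3=\begin{bmatrix}-c&-d&a&b\\ f_1&0&f_2&0\\ 0&f_1&0&f_2\end{bmatrix}.$$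
   Context: $\nu(M)$ denotes minimal number of generators. An ideal $I$ of a local ring $R$ with $\nu(I)=n$, minimal generating set $f_1,\dots,f_n$, Koszul complex $E$ on $f_1,\dots,f_n$ and $S=R/I$ is a quasi-complete intersection (q.c.i.) ideal if $\mathrm H_1(E)$ is a free $S$-module and the canonical homomorphism of graded $S$-algebras $\bigwedge^S_* \mathrm H_1(E)\to \mathrm H_*(E)$ is bijective. $\operatorname{grade}_R(I)$ is the maximal length of an $R$-regular sequence in $I$. *)

From HB Require Import structures.
From mathcomp Require Import all_boot all_order all_algebra.
Set Implicit Arguments. Unset Strict Implicit. Unset Printing Implicit Defensive.
Import Order.TTheory GRing.Theory Num.Theory.
Local Open Scope ring_scope.

Section Defs.
Variable R : comNzRingType.

Definition is_ideal (P : R -> Prop) : Prop :=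
  [/\ P 0, (forall x y, P x -> P y -> P (x + y)) & (forall r x, P x -> P (r * x))].

Definition gen_ideal (s : seq R) (x : R) : Prop :=
  exists c : seq R, x = \sum_(i < size s) c`_i * s`_i.

Definition generates (P : R -> Prop) (s : seq R) : Prop :=
  forall x, P x <-> gen_ideal s x.

Definition noetherian : Prop :=
  forall P, is_ideal P -> exists s, generates P s.

Definition proper_ideal (P : R -> Prop) : Prop := is_ideal P /\ ~ P 1.

Definition maximal_ideal (P : R -> Prop) : Prop :=
  proper_ideal P /\
  forall Q, proper_ideal Q -> (forall x, P x -> Q x) -> forall x, Q x <-> P x.

Definition nu (P : R -> Prop) (n : nat) : Prop :=
  (exists s, size s = n /\ generates P s) /\
  (forall s, generates P s -> (n <= size s)%N).

Definition regular_seq (s : seq R) : Prop :=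
  (forall i, (i < size s)%N ->
     forall y, gen_ideal (take i s) (s`_i * y) -> gen_ideal (take i s) y)
  /\ ~ gen_ideal s 1.

Definition grade (P : R -> Prop) (g : nat) : Prop :=
  (exists s, [/\ regular_seq s, size s = g & forall i, (i < size s)%N -> P s`_i]) /\
  (forall s, regular_seq s -> (forall i, (i < size s)%N -> P s`_i) -> (size s <= g)%N).

(** Koszul complex E on f1, f2:  E_2 = R (v1/\v2) -> E_1 = R v1 + R v2 -> E_0 = R,
    with d(v_i) = f_i and d(v1/\v2) = f1 v2 - f2 v1.  Elements of E_1 are pairs. *)
Variables f1 f2 : R.

Definition inI (x : R) : Prop := gen_ideal [:: f1; f2] x.

Definition kcycle (z : R * R) : Prop := z.1 * f1 + z.2 * f2 = 0.

Definition kbound (z : R * R) : Prop := exists t, z = (- (t * f2), t * f1).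

(** H_2(E) = Z_2(E) = (0 :_R I) *)
Definition kcycle2 (x : R) : Prop := x * f1 = 0 /\ x * f2 = 0.

Definition lincomb r (w : 'I_r -> R * R) (c : 'I_r -> R) : R * R :=
  (\sum_(i < r) c i * (w i).1, \sum_(i < r) c i * (w i).2).

Definition H1_generated r (w : 'I_r -> R * R) : Prop :=
  (forall i, kcycle (w i)) /\
  forall z, kcycle z -> exists c, kbound (z.1 - (lincomb w c).1, z.2 - (lincomb w c).2).

(** the classes of w_1..w_r form a basis of H_1(E) as S-module *)
Definition H1_basis r (w : 'I_r -> R * R) : Prop :=
  H1_generated w /\
  forall c, kbound (lincomb w c) -> forall i, inI (c i).

(** product in the Koszul algebra: E_1 x E_1 -> E_2 *)
Definition kprod (z z' : R * R) : R := z.1 * z'.2 - z.2 * z'.1.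

(** q.c.i.: H_1(E) free over S with basis [w_i] and the canonical map
    /\^S_* H_1(E) -> H_*(E) bijective.  Degree 0 and 1 are the identity maps
    S -> H_0 = R/I and H_1 -> H_1; degree 2: basis w_i /\ w_j (i<j) goes to
    the class of w_i w_j in H_2 = Z_2; degree k >= 3: /\^k S^r (free of rank
    'C(r,k)) maps to H_k = 0, so bijectivity means it is zero. *)
Definition wedge2_bijective r (w : 'I_r -> R * R) : Prop :=
  (forall x, kcycle2 x -> exists c : 'I_r -> 'I_r -> R,
       x = \sum_(i < r) \sum_(j < r | (i < j)%N) c i j * kprod (w i) (w j)) /\
  (forall c : 'I_r -> 'I_r -> R,
       \sum_(i < r) \sum_(j < r | (i < j)%N) c i j * kprod (w i) (w j) = 0 ->
       forall i j : 'I_r, (i < j)%N -> inI (c i j)).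

Definition qci : Prop :=
  exists r (w : 'I_r -> R * R),
    [/\ H1_basis w, wedge2_bijective w &
        forall k, (3 <= k)%N -> 'C(r, k) = 0%N \/ inI 1].

Definition cond2 : Prop :=
  (exists w : 'I_2 -> R * R, H1_basis w) /\
  exists z : 'I_2 -> R * R,
    [/\ H1_generated z,
        (forall i : 'I_2, ~ H1_generated (fun _ : 'I_1 => z i)) &
        let Delta := kprod (z 0) (z 1) in
        (forall x, kcycle2 x <-> exists t, x = Delta * t) /\
        (forall x, x * Delta = 0 <-> inI x)].

Definition exact_at n p q (A : 'M[R]_(n, p)) (B : 'M[R]_(q, n)) : Prop :=
  B *m A = 0 /\ forall x : 'cV[R]_n, B *m x = 0 -> exists y : 'cV[R]_p, x = A *m y.

Definition mx_of_seq m n (L : seq (seq R)) : 'M[R]_(m, n) :=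
  \matrix_(i < m, j < n) nth 0 (nth [::] L i) j.

Definition cond3 (mm : R -> Prop) : Prop :=
  exists a b c d : R, [/\ mm a, mm b, mm c, mm d &
    let d0 := mx_of_seq 1 1 [:: [:: a * d - b * c]] in
    let d1 := mx_of_seq 1 2 [:: [:: f1; f2]] in
    let d1T := mx_of_seq 2 1 [:: [:: f1]; [:: f2]] in
    let d2 := mx_of_seq 2 3 [:: [:: - f2; a; b]; [:: f1; c; d]] in
    let d3 := mx_of_seq 3 4 [:: [:: - c; - d; a; b]; [:: f1; 0; f2; 0];
                                [:: 0; f1; 0; f2]] in
    [/\ exact_at d3 d2, exact_at d2 d1, exact_at d1 d0 & exact_at d0 d1T]].

End Defs.

(* Every element of I = (f1, f2) is a zero divisor, so in the noetherian ring R the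
   annihilator (0 : I) = H_2(E) is nonzero: an element y whose annihilator is maximal
   among annihilators of nonzero elements has a prime annihilator, and prime avoidance
   together with the ascending chain condition puts I inside one of them.  Hence a
   q.c.i. basis of H_1(E) has exactly two elements z_1, z_2, and bijectivity of
   /\^2 H_1(E) -> H_2(E) says that H_2(E) = Delta R with (0 : Delta) = I, Delta = z_1 z_2.
   Writing z_1 = (a, c) and z_2 = (b, d), condition (2) is then, entry by entry, the
   exactness of the displayed sequence; a, b, c, d lie in m because a cycle with a unit
   coefficient would make f_1 a multiple of f_2 or conversely. *)

From HB Require Import structures.
From mathcomp Require Import all_boot all_order all_algebra.
From mathcomp Require Import ring zify.
From Stdlib Require Import Classical IndefiniteDescription.
Set Implicit Arguments. Unset Strict Implicit. Unset Printing Implicit Defensive.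
Import GRing.Theory.
Local Open Scope ring_scope.

Section Ideals.
Variable R : comNzRingType.

Lemma is_ideal_ext (P Q : R -> Prop) :
  (forall x, P x <-> Q x) -> is_ideal P -> is_ideal Q.
Proof.
move=> PQ [P0 PD PM]; split; first exact/PQ.
- by move=> x y /PQ Px /PQ Py; apply/PQ; apply: PD.
- by move=> r x /PQ Px; apply/PQ; apply: PM.
Qed.

Lemma gen_ideal_nil (x : R) : gen_ideal [::] x <-> x = 0.
Proof.
split; first by case=> c ->; rewrite big_ord0.
by move=> ->; exists [::]; rewrite big_ord0.
Qed.

Lemma gen_ideal_seq1 (g x : R) : gen_ideal [:: g] x <-> exists c, x = c * g.
Proof.
split; first by case=> c ->; exists c`_0; rewrite big_ord1.
by case=> c ->; exists [:: c]; rewrite big_ord1.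
Qed.

Lemma gen_ideal_seq2 (g1 g2 x : R) :
  gen_ideal [:: g1; g2] x <-> exists p q, x = p * g1 + q * g2.
Proof.
split; first by case=> c ->; exists c`_0, c`_1; rewrite !big_ord_recl big_ord0 addr0.
by case=> p [q ->]; exists [:: p; q]; rewrite !big_ord_recl big_ord0 addr0.
Qed.

Lemma gen_ideal_is_ideal (s : seq R) : is_ideal (gen_ideal s).
Proof.
split; first by exists [::]; rewrite big1 // => i _; rewrite nth_nil mul0r.
- move=> _ _ [c ->] [c' ->]; exists (mkseq (fun i => c`_i + c'`_i) (size s)).
  by rewrite -big_split; apply: eq_bigr => i _; rewrite nth_mkseq // mulrDl.
- move=> r _ [c ->]; exists (mkseq (fun i => r * c`_i) (size s)).
  by rewrite mulr_sumr; apply: eq_bigr => i _; rewrite nth_mkseq // mulrA.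
Qed.

Lemma gen_ideal_mem (s : seq R) i : (i < size s)%N -> gen_ideal s s`_i.
Proof.
move=> lt_i_s; exists (mkseq (fun j => (j == i)%:R) (size s)).
rewrite (bigD1 (Ordinal lt_i_s)) //= nth_mkseq // eqxx mul1r big1 ?addr0 // => j.
by rewrite -val_eqE nth_mkseq //= => /negbTE ->; rewrite mul0r.
Qed.

Lemma gen_ideal_min (P : R -> Prop) (s : seq R) :
  is_ideal P -> (forall i, (i < size s)%N -> P s`_i) -> forall x, gen_ideal s x -> P x.
Proof.
move=> [P0 PD PM] Ps _ [c ->]; apply: big_ind => // i _.
by apply: PM; apply: Ps.
Qed.

Lemma gen_ideal_rcons (L : seq R) y x : gen_ideal L x -> gen_ideal (rcons L y) x.
Proof.
apply: (gen_ideal_min (gen_ideal_is_ideal (rcons L y))) => i lt_i_L.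
have -> : L`_i = (rcons L y)`_i by rewrite nth_rcons lt_i_L.
by apply: gen_ideal_mem; rewrite size_rcons ltnS ltnW.
Qed.

Lemma gen_ideal_rcons_last (L : seq R) y : gen_ideal (rcons L y) y.
Proof.
have := @gen_ideal_mem (rcons L y) (size L).
by rewrite nth_rcons ltnn eqxx size_rcons; apply.
Qed.

Definition ann (y r : R) : Prop := r * y = 0.

Lemma ann_is_ideal y : is_ideal (ann y).
Proof.
rewrite /ann; split; first by rewrite mul0r.
- by move=> r s Hr Hs; rewrite mulrDl Hr Hs addr0.
- by move=> r s Hs; rewrite -mulrA Hs mulr0.
Qed.

Definition maximal_ann (y : R) : Prop :=
  y != 0 /\ forall z, z != 0 -> (forall r, ann y r -> ann z r) -> forall r, ann z r -> ann y r.

Lemma maximal_ann_prime y r s : maximal_ann y -> ann y (r * s) -> ann y r \/ ann y s.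
Proof.
move=> [_ ymax] rsy; case: (eqVneq (s * y) 0) => [|sy0]; first by right.
left; apply: (ymax (s * y) sy0); last by rewrite /ann mulrA.
by move=> t ty; rewrite /ann mulrCA ty mulr0.
Qed.

Lemma maximal_ann_mul y r s : maximal_ann y -> ~ ann y r -> ~ ann y s -> ~ ann y (r * s).
Proof. by move=> ymax nr ns /(maximal_ann_prime ymax) []. Qed.

Lemma maximal_ann_separation y (L : seq R) : maximal_ann y ->
  (exists2 y', y' \in L & forall r, ann y' r -> ann y r) \/
  (exists q, ~ ann y q /\ forall y', y' \in L -> ann y' q).
Proof.
move=> ymax; elim: L => [|y0 L IH].
  by right; exists 1; split => //; rewrite /ann mul1r; apply/eqP; case: ymax.
case: IH => [[y' y'L sub]|[q [qy qL]]].
  by left; exists y' => //; rewrite inE y'L orbT.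
case: (classic (forall r, ann y0 r -> ann y r)) => [sub|].
  by left; exists y0 => //; rewrite mem_head.
move=> /not_all_ex_not [s nsub]; have [sy0 sy] := imply_to_and _ _ nsub.
right; exists (q * s); split; first exact: maximal_ann_mul.
move=> y'; rewrite inE => /orP [/eqP ->|y'L]; first by rewrite /ann -mulrA sy0 mulr0.
by rewrite /ann mulrAC qL // mul0r.
Qed.

(* Prime avoidance, for the primes of [maximal_ann_prime]. *)
Lemma ann_avoidance (P : R -> Prop) (L : seq R) : is_ideal P ->
  (forall y, y \in L -> maximal_ann y /\ exists2 g, P g & ~ ann y g) ->
  exists2 g, P g & forall y, y \in L -> ~ ann y g.
Proof.
move=> HP; elim: L => [|y L IH] HL; first by exists 0 => //; case: HP.
have [g Pg gL] : exists2 g, P g & forall y, y \in L -> ~ ann y g.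
  by apply: IH => y' y'L; apply: HL; rewrite inE y'L orbT.
have [ymax [h Ph hy]] := HL y (mem_head _ _).
case: (classic (ann y g)) => gy; last first.
  by exists g => // y'; rewrite inE => /orP [/eqP ->|]; last exact: gL.
case: (maximal_ann_separation L ymax) => [[y' y'L sub]|[q [qy qL]]].
  have y'yL : y' \in y :: L by rewrite inE y'L orbT.
  have [y'max _] := HL y' y'yL.
  by case: (gL y' y'L); apply: (proj2 y'max y (proj1 ymax) sub).
exists (g + h * q); first by case: HP => _ PD PM; apply: PD => //; rewrite mulrC; apply: PM.
move=> y'; rewrite /ann mulrDl inE => /orP [/eqP ->|y'L].
  by rewrite gy add0r; apply: maximal_ann_mul.
by rewrite -mulrA qL // mulr0 addr0; apply: gL.
Qed.

End Ideals.

Section Noetherian.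
Variable R : comNzRingType.
Hypothesis noeth : noetherian R.

Lemma noetherian_acc (J : nat -> R -> Prop) :
  (forall n, is_ideal (J n)) -> (forall n x, J n x -> J n.+1 x) ->
  exists N, forall n x, J n x -> J N x.
Proof.
move=> Jideal Jmon.
have Jle n m : (n <= m)%N -> forall x, J n x -> J m x.
  move=> /subnK <- x Jx; elim: (m - n)%N => [|k IH]; first by rewrite add0n.
  by rewrite addSn; apply: Jmon.
pose U x := exists n, J n x.
have Uideal : is_ideal U.
  split; first by exists 0%N; case: (Jideal 0%N).
  - move=> x y [n Jx] [m Jy]; exists (maxn n m); case: (Jideal (maxn n m)) => _ JD _.
    by apply: JD; [apply: (Jle n) (leq_maxl n m) _ _ | apply: (Jle m) (leq_maxr n m) _ _].
  - by move=> r x [n Jx]; exists n; case: (Jideal n) => _ _ JM; apply: JM.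
have [s Us] := noeth Uideal.
have [N JN] : exists N, forall i, (i < size s)%N -> J N s`_i.
  have Us_i i : (i < size s)%N -> U s`_i by move=> lt_i_s; apply/Us; apply: gen_ideal_mem.
  elim: (size s) Us_i => [|k IH] Uk; first by exists 0%N.
  have [N1 JN1] := IH (fun i lt_i_k => Uk i (ltnW lt_i_k)).
  have [n Jn] := Uk k (ltnSn k).
  exists (maxn N1 n) => i; rewrite ltnS leq_eqVlt => /orP [/eqP ->|lt_i_k].
    exact: (Jle n) (leq_maxr N1 n) _ Jn.
  exact: (Jle N1) (leq_maxl N1 n) _ (JN1 i lt_i_k).
exists N => n x Jx; apply: (gen_ideal_min (Jideal N) JN).
by apply/Us; exists n.
Qed.

Lemma noetherian_maximal (good : (R -> Prop) -> Prop) (J0 : R -> Prop) :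
  (forall Q, good Q -> is_ideal Q) -> good J0 ->
  exists2 Q, good Q & forall Q', good Q' -> (forall x, Q x -> Q' x) -> forall x, Q' x -> Q x.
Proof.
move=> good_ideal gJ0; apply: NNPP => nomax.
have bigger Q : exists Q', good Q ->
    [/\ good Q', forall x, Q x -> Q' x & exists2 x, Q' x & ~ Q x].
  case: (classic (good Q)) => [gQ|]; last by exists Q.
  apply: NNPP => nobig; apply: nomax; exists Q => // Q' gQ' QQ' x Q'x.
  by apply: NNPP => Qx; apply: nobig; exists Q' => _; split => //; exists x.
pose next Q := proj1_sig (constructive_indefinite_description _ (bigger Q)).
have nextP Q : good Q ->
    [/\ good (next Q), forall x, Q x -> next Q x & exists2 x, next Q x & ~ Q x].
  exact: (proj2_sig (constructive_indefinite_description _ (bigger Q))).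
pose J n := iter n next J0.
have gJ n : good (J n) by elim: n => //= n /nextP [].
have [N JN] := noetherian_acc (fun n => good_ideal _ (gJ n))
  (fun n => let: And3 _ sub _ := nextP _ (gJ n) in sub).
by have [_ _ [x Jx nJx]] := nextP _ (gJ N); apply: nJx (JN N.+1 x Jx).
Qed.

Lemma exists_maximal_ideal (J0 : R -> Prop) : proper_ideal J0 ->
  exists P, maximal_ideal P /\ forall x, J0 x -> P x.
Proof.
move=> pJ0.
pose good Q := proper_ideal Q /\ forall x, J0 x -> Q x.
have goodJ0 : good J0 by split.
have [Q [pQ J0Q] Qmax] := @noetherian_maximal good _ (fun Q gQ => proj1 (proj1 gQ)) goodJ0.
exists Q; split => //; split => // Q' pQ' QQ' x; split; last exact: QQ'.
by apply: (Qmax Q') => //; split => // y /J0Q /QQ'.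
Qed.

Lemma exists_maximal_ann (x : R) : x != 0 ->
  exists2 y, maximal_ann y & forall r, ann x r -> ann y r.
Proof.
move=> x0.
pose good (Q : R -> Prop) :=
  exists y, [/\ y != 0, forall r, ann x r -> ann y r & forall r, Q r <-> ann y r].
have good_ideal Q : good Q -> is_ideal Q.
  by case=> y [_ _ Qy]; apply: is_ideal_ext (ann_is_ideal y) => r; rewrite Qy.
have goodx : good (ann x) by exists x.
have [Q [y [y0 xy Qy]] Qmax] := noetherian_maximal good_ideal goodx.
exists y => //; split => // z z0 yz r zr; apply/Qy; apply: (Qmax (ann z)) => //.
  by exists z; split => // t /xy /yz.
by move=> t /Qy /yz.
Qed.

Lemma zero_divisor_ideal_ann (P : R -> Prop) : is_ideal P ->
  (forall g, P g -> exists2 x, x != 0 & ann x g) ->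
  exists2 x, x != 0 & forall g, P g -> ann x g.
Proof.
move=> HP zdP; apply: NNPP => noann.
have outP y : y != 0 -> exists2 g, P g & ~ ann y g.
  move=> y0; apply: NNPP => H; apply: noann; exists y => // g Pg.
  by apply: NNPP => gy; apply: H; exists g.
(* A maximal ideal (L) generated by [maximal_ann] elements is contradicted by a
   [maximal_ann] element killed by some g in P that kills no element of L. *)
pose good (Q : R -> Prop) :=
  exists L, (forall y, y \in L -> maximal_ann y) /\ forall x, Q x <-> gen_ideal L x.
have good_ideal Q : good Q -> is_ideal Q.
  by case=> L [_ QL]; apply: is_ideal_ext (gen_ideal_is_ideal L) => r; rewrite QL.
have good0 : good (gen_ideal [::]) by exists [::].
have [Q [L [Lmax QL]] Qmax] := noetherian_maximal good_ideal good0.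
have [g Pg gL] :=
  ann_avoidance HP (fun y yL => conj (Lmax y yL) (outP y (proj1 (Lmax y yL)))).
have [x x0 gx] := zdP g Pg.
have [y ymax xy] := exists_maximal_ann x0.
have gy := xy g gx.
case: (maximal_ann_separation L ymax) => [[y' y'L y'y]|[q [qy qL]]].
  by case: (gL y' y'L); apply: (proj2 (Lmax y' y'L) y (proj1 ymax) y'y).
have Ly : gen_ideal L y.
  apply/QL; apply: (Qmax (gen_ideal (rcons L y))).
  - exists (rcons L y); split => // z; rewrite mem_rcons inE => /orP [/eqP -> //|].
    exact: Lmax.
  - by move=> z /QL /gen_ideal_rcons.
  - exact: gen_ideal_rcons_last.
apply: qy; have := gen_ideal_min (ann_is_ideal q) _ Ly; rewrite /ann mulrC; apply.
by move=> i lt_i_L; rewrite /ann mulrC; apply: qL; rewrite mem_nth.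
Qed.

Lemma nonmaximal_unit (mm : R -> Prop) :
  (forall P, maximal_ideal P -> forall x, P x <-> mm x) ->
  forall u, ~ mm u -> exists v, u * v = 1.
Proof.
move=> mm_unique u u_mm; apply: NNPP => u_nonunit.
pose uR x := exists s, x = u * s.
have uR_proper : proper_ideal uR.
  split; last by case=> s /esym us1; apply: u_nonunit; exists s.
  split; first by exists 0; rewrite mulr0.
  - by move=> _ _ [s ->] [s' ->]; exists (s + s'); rewrite mulrDr.
  - by move=> r _ [s ->]; exists (r * s); rewrite mulrCA.
have [P [Pmax uRP]] := exists_maximal_ideal uR_proper.
by apply: u_mm; apply/(mm_unique P Pmax); apply: uRP; exists 1; rewrite mulr1.
Qed.

End Noetherian.

Section Koszul.
Variable R : comNzRingType.
Variables f1 f2 : R.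

Lemma ord2_cases (i : 'I_2) : i = 0 \/ i = 1.
Proof. by case: i => [[|[|i]] lt_i_2] //; [left|right]; apply: val_inj. Qed.

Lemma ord2_ord0 : (ord0 : 'I_2) = 0. Proof. exact: val_inj. Qed.
Lemma ord2_lift0 : (lift ord0 ord0 : 'I_2) = 1. Proof. exact: val_inj. Qed.

Lemma lincomb_ord2 (w : 'I_2 -> R * R) c : lincomb w c =
  (c 0 * (w 0).1 + c 1 * (w 1).1, c 0 * (w 0).2 + c 1 * (w 1).2).
Proof. by rewrite /lincomb !big_ord_recl !big_ord0 !addr0 ord2_ord0 ord2_lift0. Qed.

Lemma sum_kprod_ord2 (w : 'I_2 -> R * R) (c : 'I_2 -> 'I_2 -> R) :
  \sum_(i < 2) \sum_(j < 2 | (i < j)%N) c i j * kprod (w i) (w j) =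
  c 0 1 * kprod (w 0) (w 1).
Proof.
rewrite big_ord_recl big_ord1 /= !big_mkcond !big_ord_recl !big_ord0 /=.
by rewrite big_mkcond !big_ord_recl big_ord0 /= !add0r !addr0 ord2_ord0 ord2_lift0.
Qed.

Lemma kprod_cycle2 z z' : kcycle f1 f2 z -> kcycle f1 f2 z' -> kcycle2 f1 f2 (kprod z z').
Proof.
case: z => a b; case: z' => c d; rewrite /kcycle /kcycle2 /kprod /= => abf cdf; split.
  have -> : (a * d - b * c) * f1 = d * (a * f1 + b * f2) - b * (c * f1 + d * f2) by ring.
  by rewrite abf cdf !mulr0 subr0.
have -> : (a * d - b * c) * f2 = a * (c * f1 + d * f2) - c * (a * f1 + b * f2) by ring.
by rewrite abf cdf !mulr0 subr0.
Qed.

Lemma kprod_boundary b w : kbound f1 f2 b -> kcycle f1 f2 w ->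
  kprod b w = 0 /\ kprod w b = 0.
Proof.
case=> t ->; case: w => p q; rewrite /kcycle /kprod /= => pqf; split.
  have -> : - (t * f2) * q - t * f1 * p = - t * (p * f1 + q * f2) by ring.
  by rewrite pqf mulr0.
have -> : p * (t * f1) - q * - (t * f2) = t * (p * f1 + q * f2) by ring.
by rewrite pqf mulr0.
Qed.

Lemma H1_basis_of_ann_kprod (z : 'I_2 -> R * R) : H1_generated f1 f2 z ->
  (forall x, x * kprod (z 0) (z 1) = 0 -> inI f1 f2 x) -> H1_basis f1 f2 z.
Proof.
move=> [zcyc zgen] annD; split => // c /kprod_boundary zbound.
have [zb0 _] := zbound _ (zcyc 1); have [_ zb1] := zbound _ (zcyc 0).
move: zb0 zb1 annD; rewrite lincomb_ord2.
case: (z 0) => a a'; case: (z 1) => b b'; rewrite /kprod /= => zb0 zb1 annD i.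
by case: (ord2_cases i) => ->; apply: annD; [rewrite -zb0 | rewrite -zb1]; ring.
Qed.

Lemma H1_basis_single (w : 'I_2 -> R * R) i : ~ inI f1 f2 1 -> H1_basis f1 f2 w ->
  ~ H1_generated f1 f2 (fun _ : 'I_1 => w i).
Proof.
move=> one_notin [[wcyc _] wfree] [_ wigen].
have dependent (c : 'I_2 -> R) k : kbound f1 f2 (lincomb w c) -> c k = 1 -> False.
  by move=> /wfree /(_ k) + ck; rewrite ck.
case: (ord2_cases i) wigen => -> wigen.
- have [c [t wc]] := wigen (w 1) (wcyc 1).
  apply: (dependent (fun k => if val k == 0%N then - c ord0 else 1) 1) => //.
  by exists t; rewrite -wc lincomb_ord2 /lincomb !big_ord1 /=; congr pair; ring.
- have [c [t wc]] := wigen (w 0) (wcyc 0).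
  apply: (dependent (fun k => if val k == 0%N then 1 else - c ord0) 0) => //.
  by exists t; rewrite -wc lincomb_ord2 /lincomb !big_ord1 /=; congr pair; ring.
Qed.

Lemma cond2_qci : cond2 f1 f2 -> qci f1 f2.
Proof.
move=> [_ [z [zgen _ /= [H2D annD]]]].
exists 2%N, z; split.
- by apply: H1_basis_of_ann_kprod => // x /annD.
- split=> [x /H2D [t ->]|c]; first by exists (fun _ _ => t); rewrite sum_kprod_ord2 mulrC.
  rewrite sum_kprod_ord2 => /annD c01 i j lt_ij.
  by case: (ord2_cases i) (ord2_cases j) lt_ij => -> [] ->.
- by move=> k k_ge3; left; apply: bin_small.
Qed.

Section MinimalGenerators.
Hypothesis nu2 : nu (gen_ideal [:: f1; f2]) 2.

Lemma nu2_not_principal g : ~ generates (gen_ideal [:: f1; f2]) [:: g].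
Proof. by case: nu2 => _ nu_min /nu_min. Qed.

Lemma one_notin_I : ~ inI f1 f2 1.
Proof.
move=> one_in; apply: (@nu2_not_principal 1) => x; split => _.
  by apply/gen_ideal_seq1; exists x; rewrite mulr1.
by rewrite -[x]mulr1; case: (gen_ideal_is_ideal [:: f1; f2]) => _ _; apply.
Qed.

Lemma f1_notin_f2R t : f1 <> t * f2.
Proof.
move=> f1E; apply: (@nu2_not_principal f2) => x; split.
  move/gen_ideal_seq2 => [p [q ->]]; apply/gen_ideal_seq1.
  by exists (p * t + q); rewrite f1E; ring.
by move/gen_ideal_seq1 => [c ->]; apply/gen_ideal_seq2; exists 0, c; ring.
Qed.

Lemma f2_notin_f1R t : f2 <> t * f1.
Proof.
move=> f2E; apply: (@nu2_not_principal f1) => x; split.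
  move/gen_ideal_seq2 => [p [q ->]]; apply/gen_ideal_seq1.
  by exists (p + q * t); rewrite f2E; ring.
by move/gen_ideal_seq1 => [c ->]; apply/gen_ideal_seq2; exists c, 0; ring.
Qed.

Section GradeZero.
Hypothesis grade0 : grade (gen_ideal [:: f1; f2]) 0.

Lemma I_zero_divisors g : inI f1 f2 g -> exists2 x, x != 0 & ann x g.
Proof.
case: grade0 => _ grade_max g_in; apply: NNPP => g_regular.
have g_seq_in : forall i, (i < size [:: g])%N -> inI f1 f2 [:: g]`_i by case.
suff /grade_max /(_ g_seq_in) : regular_seq [:: g] by [].
split=> [[|i] //= _ y /gen_ideal_nil gy|/gen_ideal_seq1 [c g1]].
  apply/gen_ideal_nil; apply: NNPP => y0; apply: g_regular; exists y => //; exact/eqP.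
apply: one_notin_I; rewrite g1; case: (gen_ideal_is_ideal [:: f1; f2]) => _ _; exact.
Qed.

Hypothesis noeth : noetherian R.

Lemma kcycle2_neq0 : exists2 x, x != 0 & kcycle2 f1 f2 x.
Proof.
have [x x0 Ix] := zero_divisor_ideal_ann noeth (gen_ideal_is_ideal _) I_zero_divisors.
have f1_in : inI f1 f2 f1 by apply/gen_ideal_seq2; exists 1, 0; ring.
have f2_in : inI f1 f2 f2 by apply/gen_ideal_seq2; exists 0, 1; ring.
by exists x => //; split; rewrite mulrC; [apply: Ix f1_in | apply: Ix f2_in].
Qed.

(* For r <= 1 there are no wedges w_i /\ w_j although H_2 = (0 : I) is nonzero,
   and for r >= 3 the module /\^3 S^r is nonzero although H_3 = 0. *)
Lemma qci_rank r (w : 'I_r -> R * R) : wedge2_bijective f1 f2 w ->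
  (forall k, (3 <= k)%N -> 'C(r, k) = 0%N \/ inI f1 f2 1) -> r = 2%N.
Proof.
move=> [wsurj _] wedge3; case: (ltngtP r 2) => // r2; exfalso.
  have [x x0 x_cyc] := kcycle2_neq0; have [c xc] := wsurj x x_cyc.
  move/eqP: x0; apply; rewrite xc big1 // => i _; rewrite big1 // => j lt_ij.
  by move: (ltn_ord j) lt_ij r2; lia.
case: (wedge3 3%N isT) => [C3|/one_notin_I //].
by have := bin_gt0 r 3; rewrite C3 r2.
Qed.

Lemma qci_cond2 : qci f1 f2 -> cond2 f1 f2.
Proof.
move=> [r [w [wbasis [wsurj winj] wedge3]]].
have r2 := qci_rank (conj wsurj winj) wedge3; subst r.
split; first by exists w.
exists w; split; first exact: proj1 wbasis.
  by move=> i; apply: H1_basis_single one_notin_I wbasis.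
have [D1 D2] := kprod_cycle2 (proj1 (proj1 wbasis) 0) (proj1 (proj1 wbasis) 1).
split=> x; split.
- by move=> /wsurj [c ->]; rewrite sum_kprod_ord2; exists (c 0 1); rewrite mulrC.
- by move=> [t ->]; split; rewrite mulrAC ?D1 ?D2 mul0r.
- by move=> xD; have := winj (fun _ _ => x); rewrite sum_kprod_ord2 => /(_ xD 0 1); apply.
- move=> /gen_ideal_seq2 [p [q ->]].
  have -> : (p * f1 + q * f2) * kprod (w 0) (w 1) =
    p * (kprod (w 0) (w 1) * f1) + q * (kprod (w 0) (w 1) * f2) by ring.
  by rewrite D1 D2 !mulr0 addr0.
Qed.

End GradeZero.
End MinimalGenerators.
End Koszul.

Section Exactness.
Variable R : comNzRingType.
Variables f1 f2 a b c d : R.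

Let zero_of_multiple (x e k : R) : x = k * e -> e = 0 -> x = 0.
Proof. by move=> -> ->; rewrite mulr0. Qed.

Local Ltac lin := solve [ ring | match goal with H : _ = 0 |- _ =>
  first [ apply: (zero_of_multiple (k := 1) _ H); ring
        | apply: (zero_of_multiple (k := -1) _ H); ring ] end ].
Local Ltac mx := rewrite /mx_of_seq ?mxE ?big_ord_recl ?big_ord0 ?mxE /=.
Local Ltac mx_in H := rewrite /mx_of_seq ?mxE ?big_ord_recl ?big_ord0 ?mxE /= in H.

(* Indices in the form produced by [big_ord_recl], on which [mx] computes. *)
Lemma ord2P (i : 'I_2) : i = ord0 \/ i = lift ord0 ord0.
Proof. by case: i => [[|[|i]] lt_i] //; [left|right]; apply: val_inj. Qed.

Lemma ord3P (i : 'I_3) :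
  [\/ i = ord0, i = lift ord0 ord0 | i = lift ord0 (lift ord0 ord0)].
Proof.
by case: i => [[|[|[|i]]] lt_i] //; [apply: Or31|apply: Or32|apply: Or33]; apply: val_inj.
Qed.

Lemma ord4P (i : 'I_4) : [\/ i = ord0, i = lift ord0 ord0, i = lift ord0 (lift ord0 ord0)
  | i = lift ord0 (lift ord0 (lift ord0 ord0))].
Proof.
by case: i => [[|[|[|[|i]]]] lt_i] //;
  [apply: Or41|apply: Or42|apply: Or43|apply: Or44]; apply: val_inj.
Qed.

Local Notation D3 :=
  (mx_of_seq 3 4 [:: [:: - c; - d; a; b]; [:: f1; 0; f2; 0]; [:: 0; f1; 0; f2]]).
Local Notation D2 := (mx_of_seq 2 3 [:: [:: - f2; a; b]; [:: f1; c; d]]).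
Local Notation D1 := (mx_of_seq 1 2 [:: [:: f1; f2]]).
Local Notation D0 := (mx_of_seq 1 1 [:: [:: a * d - b * c]]).
Local Notation D1T := (mx_of_seq 2 1 [:: [:: f1]; [:: f2]]).

Lemma exact_d2_d1P : exact_at D2 D1 <->
  [/\ a * f1 + c * f2 = 0, b * f1 + d * f2 = 0 &
   forall p q, p * f1 + q * f2 = 0 -> exists t u v,
     p = - (t * f2) + u * a + v * b /\ q = t * f1 + u * c + v * d].
Proof.
split=> [[D21 D21ker]|[acf bdf ker]]; split.
- have e := congr1 (fun M : 'M[R]_(1, 3) => M ord0 (lift ord0 ord0)) D21; mx_in e; lin.
- have e := congr1 (fun M : 'M[R]_(1, 3) => M ord0 (lift ord0 (lift ord0 ord0))) D21.
  mx_in e; lin.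
- move=> p q pqf; have [|y xy] := D21ker (mx_of_seq 2 1 [:: [:: p]; [:: q]]).
    by apply/matrixP => i j; rewrite (ord1 i) (ord1 j); mx; lin.
  have e0 := congr1 (fun M : 'cV[R]_2 => M ord0 ord0) xy; mx_in e0.
  have e1 := congr1 (fun M : 'cV[R]_2 => M (lift ord0 ord0) ord0) xy; mx_in e1.
  exists (y ord0 ord0), (y (lift ord0 ord0) ord0), (y (lift ord0 (lift ord0 ord0)) ord0).
  by split; [rewrite e0|rewrite e1]; ring.
- by apply/matrixP => i j; rewrite (ord1 i); case: (ord3P j) => ->; mx; lin.
- move=> x D1x; have e := congr1 (fun M : 'M[R]_(1, 1) => M ord0 ord0) D1x; mx_in e.
  have [|t [u [v [xt xu]]]] := ker (x ord0 ord0) (x (lift ord0 ord0) ord0); first lin.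
  exists (mx_of_seq 3 1 [:: [:: t]; [:: u]; [:: v]]).
  by apply/matrixP => i j; rewrite (ord1 j); case: (ord2P i) => ->; mx;
    [rewrite xt|rewrite xu]; ring.
Qed.

Lemma exact_d1_d0P : exact_at D1 D0 <->
  [/\ (a * d - b * c) * f1 = 0, (a * d - b * c) * f2 = 0 &
   forall x, x * (a * d - b * c) = 0 -> exists p q, x = p * f1 + q * f2].
Proof.
split=> [[D10 D10ker]|[Df1 Df2 ker]]; split.
- have e := congr1 (fun M : 'M[R]_(1, 2) => M ord0 ord0) D10; mx_in e; lin.
- have e := congr1 (fun M : 'M[R]_(1, 2) => M ord0 (lift ord0 ord0)) D10; mx_in e; lin.
- move=> x xD; have [|y xy] := D10ker (mx_of_seq 1 1 [:: [:: x]]).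
    by apply/matrixP => i j; rewrite (ord1 i) (ord1 j); mx; lin.
  have e := congr1 (fun M : 'cV[R]_1 => M ord0 ord0) xy; mx_in e.
  by exists (y ord0 ord0), (y (lift ord0 ord0) ord0); rewrite e; ring.
- by apply/matrixP => i j; rewrite (ord1 i); case: (ord2P j) => ->; mx; lin.
- move=> x D0x; have e := congr1 (fun M : 'M[R]_(1, 1) => M ord0 ord0) D0x; mx_in e.
  have [|p [q xpq]] := ker (x ord0 ord0); first lin.
  exists (mx_of_seq 2 1 [:: [:: p]; [:: q]]).
  by apply/matrixP => i j; rewrite (ord1 j) (ord1 i); mx; rewrite xpq; ring.
Qed.

Lemma exact_d0_d1TP : exact_at D0 D1T <->
  [/\ (a * d - b * c) * f1 = 0, (a * d - b * c) * f2 = 0 &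
   forall x, x * f1 = 0 -> x * f2 = 0 -> exists t, x = (a * d - b * c) * t].
Proof.
split=> [[D01 D01ker]|[Df1 Df2 ker]]; split.
- have e := congr1 (fun M : 'M[R]_(2, 1) => M ord0 ord0) D01; mx_in e; lin.
- have e := congr1 (fun M : 'M[R]_(2, 1) => M (lift ord0 ord0) ord0) D01; mx_in e; lin.
- move=> x xf1 xf2; have [|y xy] := D01ker (mx_of_seq 1 1 [:: [:: x]]).
    by apply/matrixP => i j; rewrite (ord1 j); case: (ord2P i) => ->; mx; lin.
  have e := congr1 (fun M : 'cV[R]_1 => M ord0 ord0) xy; mx_in e.
  by exists (y ord0 ord0); rewrite e; ring.
- by apply/matrixP => i j; rewrite (ord1 j); case: (ord2P i) => ->; mx; lin.
- move=> x D1Tx.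
  have e0 := congr1 (fun M : 'M[R]_(2, 1) => M ord0 ord0) D1Tx; mx_in e0.
  have e1 := congr1 (fun M : 'M[R]_(2, 1) => M (lift ord0 ord0) ord0) D1Tx; mx_in e1.
  have [||t xt] := ker (x ord0 ord0); [lin|lin|].
  exists (mx_of_seq 1 1 [:: [:: t]]).
  by apply/matrixP => i j; rewrite (ord1 j) (ord1 i); mx; rewrite xt; ring.
Qed.

Lemma exact_d3_d2 : a * f1 + c * f2 = 0 -> b * f1 + d * f2 = 0 ->
  (forall x0 x1 x2, - f2 * x0 + a * x1 + b * x2 = 0 -> f1 * x0 + c * x1 + d * x2 = 0 ->
     exists y0 y1 y2 y3, [/\ x0 = - c * y0 - d * y1 + a * y2 + b * y3,
        x1 = f1 * y0 + f2 * y2 & x2 = f1 * y1 + f2 * y3]) ->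
  exact_at D3 D2.
Proof.
move=> acf bdf ker; split.
  by apply/matrixP => i j; case: (ord2P i) => ->; case: (ord4P j) => ->; mx; lin.
move=> x D2x.
have e0 := congr1 (fun M : 'M[R]_(2, 1) => M ord0 ord0) D2x; mx_in e0.
have e1 := congr1 (fun M : 'M[R]_(2, 1) => M (lift ord0 ord0) ord0) D2x; mx_in e1.
have [||y0 [y1 [y2 [y3 [x0y x1y x2y]]]]] :=
  ker (x ord0 ord0) (x (lift ord0 ord0) ord0) (x (lift ord0 (lift ord0 ord0)) ord0);
  [lin|lin|].
exists (mx_of_seq 4 1 [:: [:: y0]; [:: y1]; [:: y2]; [:: y3]]).
by apply/matrixP => i j; rewrite (ord1 j); case: (ord3P i) => ->; mx;
  [rewrite x0y|rewrite x1y|rewrite x2y]; ring.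
Qed.

End Exactness.

Section Conditions.
Variable R : comNzRingType.
Variables (mm : R -> Prop) (f1 f2 : R).
Hypothesis nu2 : nu (gen_ideal [:: f1; f2]) 2.

Lemma d2_kernel_in_d3_image a b c d : a * f1 + c * f2 = 0 -> b * f1 + d * f2 = 0 ->
  (forall x, kcycle2 f1 f2 x -> exists t, x = (a * d - b * c) * t) ->
  (forall p q, kbound f1 f2 (p * a + q * b, p * c + q * d) -> inI f1 f2 p /\ inI f1 f2 q) ->
  forall x0 x1 x2, - f2 * x0 + a * x1 + b * x2 = 0 -> f1 * x0 + c * x1 + d * x2 = 0 ->
  exists y0 y1 y2 y3, [/\ x0 = - c * y0 - d * y1 + a * y2 + b * y3,
     x1 = f1 * y0 + f2 * y2 & x2 = f1 * y1 + f2 * y3].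
Proof.
move=> acf bdf H2D free x0 x1 x2 e1 e2.
have [] : inI f1 f2 x1 /\ inI f1 f2 x2.
  apply: free; exists (- x0); congr pair; apply/eqP; rewrite -subr_eq0; apply/eqP.
    by rewrite -e1; ring.
  by rewrite -e2; ring.
move=> /gen_ideal_seq2 [p [q x1E]] /gen_ideal_seq2 [u [v x2E]]; subst x1 x2.
pose e := x0 - (- c * p - d * u + a * q + b * v).
have [t eD] : exists t, e = (a * d - b * c) * t.
  apply: H2D; split.
    have -> : e * f1 = (f1 * x0 + c * (p * f1 + q * f2) + d * (u * f1 + v * f2))
      - q * (a * f1 + c * f2) - v * (b * f1 + d * f2) by rewrite /e; ring.
    by rewrite e2 acf bdf; ring.
  have -> : e * f2 = - (- f2 * x0 + a * (p * f1 + q * f2) + b * (u * f1 + v * f2))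
    + p * (a * f1 + c * f2) + u * (b * f1 + d * f2) by rewrite /e; ring.
  by rewrite e1 acf bdf; ring.
exists (p + b * t), u, (q + d * t), v; split; last by ring.
  by rewrite -[x0](subrK (- c * p - d * u + a * q + b * v)) -/e eD; ring.
have -> : f1 * (p + b * t) + f2 * (q + d * t) = p * f1 + q * f2 + t * (b * f1 + d * f2)
  by ring.
by rewrite bdf mulr0 addr0.
Qed.

Lemma cond3_cond2 : cond3 f1 f2 mm -> cond2 f1 f2.
Proof.
move=> [a [b [c [d [_ _ _ _ /= [_ /exact_d2_d1P [acf bdf ker1]
  /exact_d1_d0P [Df1 Df2 ker0] /exact_d0_d1TP [_ _ H2D]]]]]]].
pose z (i : 'I_2) := if val i == 0%N then (a, c) else (b, d).
have zD : kprod (z 0) (z 1) = a * d - b * c by rewrite /kprod /z /=; ring.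
have zgen : H1_generated f1 f2 z.
  split=> [i|[p q] /= pqf]; first by case: (ord2_cases i) => ->.
  have [t [u [v [pE qE]]]] := ker1 p q pqf.
  exists (fun i => if val i == 0%N then u else v), t.
  by rewrite !big_ord_recl !big_ord0 /z /=; congr pair; rewrite ?pE ?qE; ring.
have annD x : x * (a * d - b * c) = 0 -> inI f1 f2 x.
  by move=> /ker0 [p [q ->]]; apply/gen_ideal_seq2; exists p, q.
have zbasis : H1_basis f1 f2 z by apply: H1_basis_of_ann_kprod zgen _; rewrite zD.
split; first by exists z.
exists z; split => // [i|]; first exact: H1_basis_single (one_notin_I nu2) zbasis.
rewrite zD; split=> x; split.
- by move=> [xf1 xf2]; apply: H2D.
- by move=> [t ->]; split; rewrite mulrAC ?Df1 ?Df2 mul0r.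
- exact: annD.
- move=> /gen_ideal_seq2 [p [q ->]].
  have -> : (p * f1 + q * f2) * (a * d - b * c) =
    p * ((a * d - b * c) * f1) + q * ((a * d - b * c) * f2) by ring.
  by rewrite Df1 Df2; ring.
Qed.

Hypothesis noeth : noetherian R.
Hypothesis mm_unique : forall P, maximal_ideal P -> forall x, P x <-> mm x.

Lemma cycle_coef_mm u v : u * f1 + v * f2 = 0 -> mm u /\ mm v.
Proof.
move=> uvf; split; apply: NNPP => /(nonmaximal_unit noeth mm_unique) [w unit_w].
  apply: (f1_notin_f2R nu2 (t := - (w * v))).
  have -> : - (w * v) * f2 = u * w * f1 - w * (u * f1 + v * f2) by ring.
  by rewrite uvf mulr0 subr0 unit_w mul1r.
apply: (f2_notin_f1R nu2 (t := - (w * u))).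
have -> : - (w * u) * f1 = v * w * f2 - w * (u * f1 + v * f2) by ring.
by rewrite uvf mulr0 subr0 unit_w mul1r.
Qed.

Lemma cond2_cond3 : cond2 f1 f2 -> cond3 f1 f2 mm.
Proof.
move=> [_ [z [zgen _ /= [H2D annD]]]].
have [[zcyc zspan] zfree] := H1_basis_of_ann_kprod zgen (fun x => proj1 (annD x)).
case E0 : (z 0) => [a c]; case E1 : (z 1) => [b d].
have acf : a * f1 + c * f2 = 0 by have := zcyc 0; rewrite E0.
have bdf : b * f1 + d * f2 = 0 by have := zcyc 1; rewrite E1.
have zD : kprod (z 0) (z 1) = a * d - b * c by rewrite E0 E1 /kprod /=; ring.
have zlin (cv : 'I_2 -> R) : lincomb z cv = (cv 0 * a + cv 1 * b, cv 0 * c + cv 1 * d).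
  by rewrite lincomb_ord2 E0 E1.
rewrite zD in H2D annD.
have [Df1 Df2] : kcycle2 f1 f2 (a * d - b * c) by apply/H2D; exists 1; rewrite mulr1.
have [ma mc] := cycle_coef_mm acf; have [mb md] := cycle_coef_mm bdf.
exists a, b, c, d; split => //=; split.
- apply: exact_d3_d2 => //; apply: d2_kernel_in_d3_image => // [x /H2D //|p q pq_bound].
  have := zfree (fun i => if val i == 0%N then p else q); rewrite zlin => /(_ pq_bound) pq.
  exact: conj (pq 0) (pq 1).
- apply/exact_d2_d1P; split => // p q pqf.
  have [cv [t]] := zspan (p, q) pqf; rewrite zlin /= => -[pE qE].
  by exists t, (cv 0), (cv 1); split; [rewrite -pE | rewrite -qE]; ring.
- by apply/exact_d1_d0P; split => // x /annD /gen_ideal_seq2.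
- by apply/exact_d0_d1TP; split => // x xf1 xf2; apply/H2D.
Qed.

End Conditions.

Theorem lemma1p7 (R : comNzRingType) (mm : R -> Prop) (f1 f2 : R) :
  noetherian R ->
  maximal_ideal mm ->
  (forall P, maximal_ideal P -> forall x, P x <-> mm x) ->
  nu (gen_ideal [:: f1; f2]) 2 ->
  grade (gen_ideal [:: f1; f2]) 0 ->
  (qci f1 f2 <-> cond2 f1 f2) /\ (cond2 f1 f2 <-> cond3 f1 f2 mm).
Proof.
move=> noeth _ mm_unique nu2 grade0; split; split.
- exact: qci_cond2 nu2 grade0 noeth.
- exact: cond2_qci.
- exact: cond2_cond3 nu2 noeth mm_unique.
- exact: cond3_cond2 nu2.
Qed.
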